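(* Let $u$ be a smooth function on $\overline\Omega$ such that $-\partial_{xx}u+L(u)+c(x)u\ge0$ in $\Omega$, where $c$ is a non-negative bounded smooth function. If there exists $x_0\in\partial\Omega$ such that $\min_{x\in\Omega}u(x)=u(x_0)<0$, then either $u$ is constant or $\partial_{\nu_x}u(x_0)<0$, where $\nu_x$ is the exterior normal.
   Context: $\Omega=\bigcup_{i=1}^m ]a_i,b_i[\subset\mathbb{R}$ with $a_1<b_1<\dots<a_m<b_m$; $K$ is a $C^1$ even function with $K>0$, $0<c_K<K<C_K$, $|K'|<C_K$; $L\phi(x)=\int_\Omega[\phi(x)-\phi(y)]K(x-y)dy$. *)

From Stdlib Require Import Reals.
From Coquelicot Require Import Coquelicot.
Open Scope R_scope.

Definition in_Omega (m : nat) (a b : nat -> R) (x : R) : Prop :=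
  exists i, (i < m)%nat /\ a i < x < b i.

Definition in_cl_Omega (m : nat) (a b : nat -> R) (x : R) : Prop :=
  exists i, (i < m)%nat /\ a i <= x <= b i.

Definition ordered_intervals (m : nat) (a b : nat -> R) : Prop :=
  (forall i, (i < m)%nat -> a i < b i) /\
  (forall i, (S i < m)%nat -> b i < a (S i)).

Definition smooth (f : R -> R) : Prop := forall n x, ex_derive_n f n x.

Definition smooth_on_cl_Omega (m : nat) (a b : nat -> R) (u : R -> R) : Prop :=
  forall i, (i < m)%nat ->
    exists v : R -> R, smooth v /\ forall x, a i <= x <= b i -> u x = v x.

Fixpoint int_Omega (n : nat) (a b : nat -> R) (g : R -> R) : R :=
  match n with
  | O => 0
  | S k => int_Omega k a b g + RInt g (a k) (b k)
  end.

Definition Lop (m : nat) (a b : nat -> R) (K : R -> R) (phi : R -> R) (x : R) : R :=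
  int_Omega m a b (fun y => (phi x - phi y) * K (x - y)).

(* exterior normal derivative at a boundary point x0 with exterior unit normal nu
   (nu = -1 at a_i, nu = +1 at b_i), computed from inside Omega:
   d_nu u(x0) = lim_{h -> 0+} (u x0 - u (x0 - h nu)) / h *)
Definition has_normal_deriv (u : R -> R) (x0 nu l : R) : Prop :=
  filterlim (fun h => (u x0 - u (x0 - h * nu)) / h) (at_right 0) (locally l).

From Stdlib Require Import Reals Lra Lia Classical.
From Coquelicot Require Import Coquelicot.
Open Scope R_scope.

(* If the negative minimum u(x0) is also attained at an interior point x1, then
   u''(x1) >= 0 and c u(x1) <= 0, so L u(x1) >= 0; but the integrand of L u(x1) is
   nonpositive, so it vanishes identically and, K being positive, u is constant on the
   closure of Omega.  Otherwise u > u(x0) in Omega, and on the interval of Omega ending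
   at x0 the supersolution inequality with K <= C_K and 0 <= c <= M yields
   u'' <= C (u - u(x0)).  A one-dimensional Hopf lemma, obtained from a second-order
   Taylor expansion at a maximum point of u close to x0, then makes the outward
   derivative negative. *)

Lemma smooth_continuous_Derive_n v n x : smooth v -> continuous (Derive_n v n) x.
Proof. intros Hv. apply (@ex_derive_continuous R_AbsRing R_NormedModule), (Hv (S n)). Qed.

Lemma smooth_comp_opp v : smooth v -> smooth (fun s => v (-1 * s)).
Proof. intros Hv n x. apply ex_derive_n_comp_scal, filter_forall. intros; apply Hv. Qed.

Lemma continuous_neg_locally f x : continuous f x -> f x < 0 ->
  exists eps, 0 < eps /\ forall y, Rabs (y - x) < eps -> f y < 0.
Proof.
  intros Hc Hfx. destruct (Hc _ (open_lt 0 (f x) Hfx)) as [eps Heps].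
  exists eps. split; [apply cond_pos|]. intros y Hy. exact (Heps y Hy).
Qed.

Lemma taylor_order2 v x y : smooth v -> x < y -> exists z, x < z < y /\
  v y = v x + (y - x) * Derive v x + (y - x)^2 / 2 * Derive_n v 2 z.
Proof.
  intros Hv Hxy.
  destruct (Taylor_Lagrange v 1 x y Hxy) as [z [Hz E]]; [intros; apply Hv|].
  exists z. split; [exact Hz|]. rewrite E. simpl.
  change (Derive (fun x => v x) x) with (Derive v x). field.
Qed.

Lemma Derive_eq0_at_interior_min v p q x : smooth v -> p < x < q ->
  (forall y, p < y < q -> v x <= v y) -> Derive v x = 0.
Proof.
  intros Hv Hx Hmin. rewrite <- (Derive_Reals v x (ex_derive_Reals_0 v x (Hv 1%nat x))).
  apply (deriv_minimum v p q); try lra. intros y Hpy Hyq. apply Hmin. lra.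
Qed.

Lemma Derive2_nonneg_at_interior_min v p q x : smooth v -> p < x < q ->
  (forall y, p < y < q -> v x <= v y) -> 0 <= Derive_n v 2 x.
Proof.
  intros Hv Hx Hmin. apply Rnot_lt_le. intros Hneg.
  destruct (continuous_neg_locally _ x (smooth_continuous_Derive_n v 2 x Hv) Hneg)
    as [eps [Heps Hnear]].
  set (h := Rmin (eps / 2) ((q - x) / 2)).
  assert (Hh : 0 < h <= eps / 2 /\ h <= (q - x) / 2).
  { unfold h. split; [split|]; [apply Rmin_glb_lt; lra | apply Rmin_l | apply Rmin_r]. }
  destruct (taylor_order2 v x (x + h) Hv) as [z [Hz Etaylor]]; [lra|].
  assert (Hz2 : Derive_n v 2 z < 0) by (apply Hnear, Rabs_lt_between; lra).
  rewrite (Derive_eq0_at_interior_min v p q x Hv Hx Hmin) in Etaylor.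
  assert (Hvh := Hmin (x + h) ltac:(lra)).
  assert (0 < (x + h - x) ^ 2 / 2) by (replace (x + h - x) with h by ring; simpl; nra).
  nra.
Qed.

Lemma hopf_left v p q k C : smooth v -> p < q -> 0 <= C -> v p = k ->
  (forall x, p < x < q -> k < v x) ->
  (forall x, p < x < q -> Derive_n v 2 x <= C * (v x - k)) -> 0 < Derive v p.
Proof.
  intros Hv Hpq HC Hp Habove Hsecond. apply Rnot_le_lt. intros Hd.
  (* At a maximum point s of v on [p, p + t], Taylor at p with v'(p) <= 0 gives
     v s - k <= (s - p)^2 C / 2 * (v s - k), and t is small enough that (s - p)^2 C < 2. *)
  set (t := Rmin ((q - p) / 2) (1 / (C + 1))).
  assert (Ht : 0 < t <= (q - p) / 2 /\ t * (C + 1) <= 1).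
  { assert (Ht1 : t <= 1 / (C + 1)) by apply Rmin_r.
    unfold t at 1 2. split; [split|]; [apply Rmin_glb_lt, Rdiv_lt_0_compat; lra | apply Rmin_l|].
    apply Rmult_le_compat_r with (r := C + 1) in Ht1; [|lra].
    replace (1 / (C + 1) * (C + 1)) with 1 in Ht1 by (field; lra). exact Ht1. }
  destruct (continuity_ab_maj v p (p + t)) as [s [Hmax Hs]]; [lra| |].
  { intros x _. apply continuity_pt_filterlim, (smooth_continuous_Derive_n v 0), Hv. }
  assert (Hvs : k < v s).
  { pose proof (Habove (p + t / 2) ltac:(lra)). pose proof (Hmax (p + t / 2) ltac:(lra)). lra. }
  assert (Hsp : p < s) by (destruct (Req_dec s p) as [->|]; lra).
  destruct (taylor_order2 v p s Hv Hsp) as [z [Hz Etaylor]].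
  assert (Hz2 : Derive_n v 2 z <= C * (v s - k)).
  { pose proof (Hsecond z ltac:(lra)). pose proof (Hmax z ltac:(lra)). nra. }
  assert (Hsmall : (s - p) ^ 2 * C < 2).
  { assert (Ht1 : t <= 1) by nra. assert ((s - p) * C <= t * C) by nra. simpl; nra. }
  assert (0 <= (s - p) ^ 2) by apply pow2_ge_0.
  nra.
Qed.

Lemma hopf_right v p q k C : smooth v -> p < q -> 0 <= C -> v q = k ->
  (forall x, p < x < q -> k < v x) ->
  (forall x, p < x < q -> Derive_n v 2 x <= C * (v x - k)) -> Derive v q < 0.
Proof.
  intros Hv Hpq HC Hq Habove Hsecond.
  assert (Hvr := smooth_comp_opp v Hv).
  assert (Hderiv : forall n x, Derive_n (fun s => v (-1 * s)) n x = (-1) ^ n * Derive_n v n (- x)).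
  { intros n x. rewrite Derive_n_comp_scal; [|apply filter_forall; intros; apply Hv].
    now replace (-1 * x) with (- x) by ring. }
  assert (Hd1 : Derive (fun s => v (-1 * s)) (- q) = - Derive v q).
  { pose proof (Hderiv 1%nat (- q)) as E. simpl in E. rewrite Ropp_involutive in E.
    rewrite E. change (Derive (fun x => v x) q) with (Derive v q). ring. }
  enough (0 < Derive (fun s => v (-1 * s)) (- q)) by lra.
  apply (hopf_left _ (- q) (- p) k C Hvr ltac:(lra) HC).
  - rewrite <- Hq. f_equal. ring.
  - intros x Hx. replace (-1 * x) with (- x) by ring. apply Habove. lra.
  - intros x Hx. rewrite Hderiv. replace (-1 * x) with (- x) by ring.
    replace ((-1) ^ 2) with 1 by ring. rewrite Rmult_1_l. apply Hsecond. lra.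
Qed.

Lemma has_normal_deriv_of_derivable u v x0 nu d delta : nu <> 0 -> 0 < delta ->
  derivable_pt_lim v x0 d -> u x0 = v x0 ->
  (forall h, 0 < h < delta -> u (x0 - h * nu) = v (x0 - h * nu)) ->
  has_normal_deriv u x0 nu (nu * d).
Proof.
  intros Hnu Hdelta Hv Hx0 Huv. apply filterlim_locally. intros eps.
  assert (Hanu : 0 < Rabs nu) by now apply Rabs_pos_lt.
  destruct (Hv (eps / Rabs nu)) as [dl Hdl]; [apply Rdiv_lt_0_compat; [apply cond_pos|lra]|].
  assert (Hr : 0 < Rmin delta (dl / Rabs nu)).
  { apply Rmin_glb_lt; [lra|]. apply Rdiv_lt_0_compat; [apply cond_pos|lra]. }
  exists (mkposreal _ Hr). intros h Hh Hpos.
  change (Rabs (h - 0) < Rmin delta (dl / Rabs nu)) in Hh.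
  rewrite Rminus_0_r, Rabs_pos_eq in Hh by lra.
  assert (Hh1 := Rlt_le_trans _ _ _ Hh (Rmin_l _ _)).
  assert (Hh2 := Rlt_le_trans _ _ _ Hh (Rmin_r _ _)).
  change (Rabs ((u x0 - u (x0 - h * nu)) / h - nu * d) < eps).
  rewrite Hx0, Huv by lra.
  replace ((v x0 - v (x0 - h * nu)) / h - nu * d)
    with (nu * ((v (x0 - h * nu) - v x0) / - (h * nu) - d)) by (field; lra).
  rewrite Rabs_mult.
  assert (Hnh : 0 < h * nu \/ h * nu < 0) by (destruct (Rdichotomy _ _ Hnu); [right|left]; nra).
  assert (Habs : Rabs (- (h * nu)) < dl).
  { rewrite Rabs_Ropp, Rabs_mult, Rabs_pos_eq by lra.
    apply Rmult_lt_compat_r with (r := Rabs nu) in Hh2; [|lra].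
    replace (dl / Rabs nu * Rabs nu) with (pos dl) in Hh2 by (field; lra). lra. }
  assert (Hlt := Hdl (- (h * nu)) ltac:(lra) Habs).
  replace (x0 + - (h * nu)) with (x0 - h * nu) in Hlt by ring.
  apply Rmult_lt_compat_l with (r := Rabs nu) in Hlt; [|lra].
  replace (Rabs nu * (eps / Rabs nu)) with (pos eps) in Hlt by (field; lra). exact Hlt.
Qed.

Lemma RInt_le_0 (h : R -> R) a b : a <= b -> ex_RInt h a b -> (forall y, a < y < b -> h y <= 0) ->
  RInt h a b <= 0.
Proof.
  intros Hab Hex Hle. rewrite <- (Rmult_0_r (b - a)).
  replace ((b - a) * 0) with (RInt (fun _ => 0) a b) by (rewrite RInt_const; reflexivity).
  apply RInt_le; auto. apply ex_RInt_const.
Qed.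

Lemma RInt_nonpos_eq0 (h : R -> R) a b : (forall y, continuous h y) ->
  (forall y, a < y < b -> h y <= 0) -> RInt h a b = 0 -> forall y, a < y < b -> h y = 0.
Proof.
  intros Hc Hle H0 y0 Hy0. destruct (Rle_lt_or_eq_dec _ _ (Hle y0 Hy0)) as [Hneg|]; [exfalso|easy].
  destruct (continuous_neg_locally h y0 (Hc y0) Hneg) as [eps [Heps Hnear]].
  set (r := Rmin (eps / 2) (Rmin ((y0 - a) / 2) ((b - y0) / 2))).
  assert (Hr : 0 < r /\ r <= eps / 2 /\ r <= (y0 - a) / 2 /\ r <= (b - y0) / 2).
  { unfold r. repeat split.
    - repeat apply Rmin_glb_lt; lra.
    - apply Rmin_l.
    - eapply Rle_trans; [apply Rmin_r|apply Rmin_l].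
    - eapply Rle_trans; [apply Rmin_r|apply Rmin_r]. }
  assert (Hex : forall s t, ex_RInt h s t).
  { intros. apply (@ex_RInt_continuous R_CompleteNormedModule). intros; apply Hc. }
  assert (Hmid : RInt h (y0 - r) (y0 + r) < RInt (fun _ => 0) (y0 - r) (y0 + r)).
  { apply RInt_lt; try lra; intros; [apply continuous_const|apply Hc|].
    apply Hnear, Rabs_lt_between. lra. }
  rewrite RInt_const in Hmid.
  assert (Hleft := RInt_le_0 h a (y0 - r) ltac:(lra) (Hex _ _) ltac:(intros; apply Hle; lra)).
  assert (Hright := RInt_le_0 h (y0 + r) b ltac:(lra) (Hex _ _) ltac:(intros; apply Hle; lra)).
  rewrite <- (RInt_Chasles h a (y0 - r) b), <- (RInt_Chasles h (y0 - r) (y0 + r) b) in H0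
    by apply Hex.
  change (scal (y0 + r - (y0 - r)) 0) with ((y0 + r - (y0 - r)) * 0) in Hmid.
  change (RInt h a (y0 - r) + (RInt h (y0 - r) (y0 + r) + RInt h (y0 + r) b) = 0) in H0.
  lra.
Qed.

Lemma continuous_const_on_closed_interval (f : R -> R) a b k :
  a < b -> continuous f a -> continuous f b ->
  (forall y, a < y < b -> f y = k) -> forall y, a <= y <= b -> f y = k.
Proof.
  intros Hab Ha Hb Hk y Hy.
  destruct (Req_dec y a) as [->|Hya]; [|destruct (Req_dec y b) as [->|Hyb]; [|apply Hk; lra]].
  - apply (filterlim_locally_unique (F := at_right a) f).
    + apply (filterlim_filter_le_1 _ (filter_le_within (F := locally a) _)), Ha.
    + apply (filterlim_ext_loc (fun _ => k)); [|apply filterlim_const].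
      assert (Hd : 0 < b - a) by lra. exists (mkposreal _ Hd). intros z Hz Haz.
      change (Rabs (z - a) < b - a) in Hz. apply Rabs_lt_between in Hz. symmetry. apply Hk. lra.
  - apply (filterlim_locally_unique (F := at_left b) f).
    + apply (filterlim_filter_le_1 _ (filter_le_within (F := locally b) _)), Hb.
    + apply (filterlim_ext_loc (fun _ => k)); [|apply filterlim_const].
      assert (Hd : 0 < b - a) by lra. exists (mkposreal _ Hd). intros z Hz Hzb.
      change (Rabs (z - b) < b - a) in Hz. apply Rabs_lt_between in Hz. symmetry. apply Hk. lra.
Qed.

Lemma int_Omega_le n a b g h :
  (forall k, (k < n)%nat -> a k <= b k /\ ex_RInt g (a k) (b k) /\ ex_RInt h (a k) (b k) /\
     (forall y, a k < y < b k -> g y <= h y)) ->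
  int_Omega n a b g <= int_Omega n a b h.
Proof.
  induction n as [|n IH]; intros H; simpl; [lra|].
  apply Rplus_le_compat; [apply IH; intros k Hk; apply H; lia|].
  destruct (H n ltac:(lia)) as [? [? [? ?]]]. apply RInt_le; auto.
Qed.

Lemma int_Omega_const n a b B : int_Omega n a b (fun _ => B) = B * int_Omega n a b (fun _ => 1).
Proof.
  induction n as [|n IH]; simpl; [ring|].
  rewrite IH, !RInt_const. change (B * int_Omega n a b (fun _ => 1) + (b n - a n) * B =
    B * (int_Omega n a b (fun _ => 1) + (b n - a n) * 1)). ring.
Qed.

Lemma int_Omega_one_nonneg n a b : (forall k, (k < n)%nat -> a k <= b k) ->
  0 <= int_Omega n a b (fun _ => 1).
Proof.
  induction n as [|n IH]; intros H; simpl; [lra|].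
  rewrite RInt_const. change (0 <= int_Omega n a b (fun _ => 1) + (b n - a n) * 1).
  assert (IH' := IH ltac:(intros; apply H; lia)). pose proof (H n ltac:(lia)). lra.
Qed.

Lemma int_Omega_nonpos n a b g : (forall k, (k < n)%nat -> RInt g (a k) (b k) <= 0) ->
  int_Omega n a b g <= 0.
Proof.
  induction n as [|n IH]; intros H; simpl; [lra|].
  assert (IH' := IH ltac:(intros; apply H; lia)). pose proof (H n ltac:(lia)). lra.
Qed.

Lemma int_Omega_parts_eq0 n a b g : (forall k, (k < n)%nat -> RInt g (a k) (b k) <= 0) ->
  0 <= int_Omega n a b g -> forall k, (k < n)%nat -> RInt g (a k) (b k) = 0.
Proof.
  induction n as [|n IH]; intros H Hsum k Hk; simpl in Hsum; [lia|].
  assert (Hn := H n ltac:(lia)).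
  assert (Hrest := int_Omega_nonpos n a b g ltac:(intros; apply H; lia)).
  destruct (Nat.eq_dec k n) as [->|]; [lra|].
  apply IH; [intros; apply H; lia|lra|lia].
Qed.

Lemma Derive_n_eq_on_interval (u v : R -> R) p q n x :
  (forall t, p <= t <= q -> u t = v t) -> p < x < q -> Derive_n u n x = Derive_n v n x.
Proof.
  intros Huv Hx. apply Derive_n_ext_loc.
  assert (Hd : 0 < Rmin (x - p) (q - x)) by (apply Rmin_glb_lt; lra).
  exists (mkposreal _ Hd). intros t Ht. change (Rabs (t - x) < Rmin (x - p) (q - x)) in Ht.
  pose proof (Rmin_l (x - p) (q - x)). pose proof (Rmin_r (x - p) (q - x)).
  apply Rabs_lt_between in Ht. apply Huv. lra.
Qed.

Section Omega.

Variables (m : nat) (a b : nat -> R) (K u : R -> R).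
Hypothesis Hab : forall k, (k < m)%nat -> a k < b k.
Hypothesis HK : forall z, continuous K z.
Hypothesis HKpos : forall z, 0 < K z.
Hypothesis Hu : smooth_on_cl_Omega m a b u.

Lemma continuous_Lop_integrand (v : R -> R) A x y : continuous v y ->
  continuous (fun y => (A - v y) * K (x - y)) y.
Proof.
  intros Hv. apply (continuous_mult (fun y => A - v y) (fun y => K (x - y))).
  - apply (continuous_minus (fun _ => A) v); [apply continuous_const|exact Hv].
  - apply (continuous_comp (fun y => x - y) K); [|apply HK].
    apply (continuous_minus (fun _ => x) (fun y => y));
      [apply continuous_const|apply continuous_id].
Qed.

Lemma ex_RInt_Lop_integrand x k : (k < m)%nat ->
  ex_RInt (fun y => (u x - u y) * K (x - y)) (a k) (b k).
Proof.
  intros Hk. destruct (Hu k Hk) as [v [Hv Huv]]. pose proof (Hab k Hk).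
  apply (ex_RInt_ext (fun y => (u x - v y) * K (x - y))).
  - intros y Hy. rewrite Rmin_left, Rmax_right in Hy by lra. now rewrite (Huv y) by lra.
  - apply (@ex_RInt_continuous R_CompleteNormedModule). intros y _.
    apply continuous_Lop_integrand, (smooth_continuous_Derive_n v 0), Hv.
Qed.

Lemma Lop_le_above_min x k0 CK : (forall z, K z <= CK) ->
  (forall y, in_Omega m a b y -> k0 <= u y) -> k0 <= u x ->
  Lop m a b K u x <= CK * int_Omega m a b (fun _ => 1) * (u x - k0).
Proof.
  intros HKCK Hmin Hx.
  assert (HCK : 0 <= CK) by (pose proof (HKpos 0); pose proof (HKCK 0); lra).
  replace (CK * int_Omega m a b (fun _ => 1) * (u x - k0))
    with (int_Omega m a b (fun _ => CK * (u x - k0))) by (rewrite int_Omega_const; ring).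
  apply int_Omega_le. intros k Hk. pose proof (Hab k Hk).
  repeat split; [lra|apply ex_RInt_Lop_integrand, Hk|apply ex_RInt_const|].
  intros y Hy. pose proof (Hmin y (ex_intro _ k (conj Hk Hy))).
  pose proof (HKCK (x - y)). pose proof (HKpos (x - y)).
  destruct (Rle_dec 0 (u x - u y)); nra.
Qed.

Lemma Lop_nonneg_at_min_const x1 : (forall y, in_Omega m a b y -> u x1 <= u y) ->
  0 <= Lop m a b K u x1 -> forall y, in_cl_Omega m a b y -> u y = u x1.
Proof.
  intros Hmin HL y [k [Hk Hy]].
  assert (Hparts : forall k, (k < m)%nat ->
    RInt (fun y => (u x1 - u y) * K (x1 - y)) (a k) (b k) <= 0).
  { intros j Hj. pose proof (Hab j Hj).
    apply RInt_le_0; [lra|apply ex_RInt_Lop_integrand, Hj|].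
    intros z Hz. pose proof (Hmin z (ex_intro _ j (conj Hj Hz))).
    pose proof (HKpos (x1 - z)). nra. }
  assert (Hzero := int_Omega_parts_eq0 _ _ _ _ Hparts HL k Hk).
  destruct (Hu k Hk) as [v [Hv Huv]]. pose proof (Hab k Hk).
  assert (Hvcont := fun z => smooth_continuous_Derive_n v 0 z Hv).
  rewrite (Huv y Hy). apply continuous_const_on_closed_interval with (a k) (b k); auto.
  intros z Hz.
  assert (Hint := RInt_nonpos_eq0 (fun y => (u x1 - v y) * K (x1 - y)) (a k) (b k)
    (fun y => continuous_Lop_integrand v (u x1) x1 y (Hvcont y))).
  assert (Hvz : (u x1 - v z) * K (x1 - z) = 0).
  { apply Hint; [| |exact Hz].
    - intros w Hw. rewrite <- Huv by lra.
      pose proof (Hmin w (ex_intro _ k (conj Hk Hw))). pose proof (HKpos (x1 - w)). nra.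
    - rewrite <- Hzero. apply RInt_ext. intros w Hw.
      rewrite Rmin_left, Rmax_right in Hw by lra. now rewrite (Huv w) by lra. }
  pose proof (HKpos (x1 - z)). apply Rmult_integral in Hvz. destruct Hvz; lra.
Qed.

Section Supersolution.

Variables (c : R -> R) (CK M : R).
Hypothesis HKCK : forall z, K z <= CK.
Hypothesis Hc0 : forall x, in_Omega m a b x -> 0 <= c x.
Hypothesis HcM : forall x, in_Omega m a b x -> c x <= M.
Hypothesis Hsup : forall x, in_Omega m a b x ->
  - Derive_n u 2 x + Lop m a b K u x + c x * u x >= 0.

Lemma supersolution_const_of_interior_min x1 : in_Omega m a b x1 ->
  (forall y, in_Omega m a b y -> u x1 <= u y) -> u x1 <= 0 ->
  forall y, in_cl_Omega m a b y -> u y = u x1.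
Proof.
  intros Hx1 Hmin Hneg. apply Lop_nonneg_at_min_const; [exact Hmin|].
  destruct Hx1 as [k [Hk Hx1]]. destruct (Hu k Hk) as [v [Hv Huv]].
  assert (Hd2 : 0 <= Derive_n u 2 x1).
  { rewrite (Derive_n_eq_on_interval u v (a k) (b k)) by assumption.
    apply (Derive2_nonneg_at_interior_min v (a k) (b k)); auto.
    intros y Hy. rewrite <- !Huv by lra. apply Hmin. exists k; auto. }
  assert (Hin : in_Omega m a b x1) by (exists k; auto).
  pose proof (Hsup x1 Hin). pose proof (Hc0 x1 Hin).
  assert (c x1 * u x1 <= 0) by nra. lra.
Qed.

Lemma supersolution_Derive2_le k0 x : in_Omega m a b x ->
  (forall y, in_Omega m a b y -> k0 <= u y) -> k0 <= 0 ->
  Derive_n u 2 x <= (CK * int_Omega m a b (fun _ => 1) + M) * (u x - k0).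
Proof.
  intros Hx Hmin Hk0.
  assert (Hux := Hmin x Hx).
  pose proof (Lop_le_above_min x k0 CK HKCK Hmin Hux).
  pose proof (Hsup x Hx). pose proof (Hc0 x Hx). pose proof (HcM x Hx).
  assert (c x * u x <= M * (u x - k0)) by nra.
  nra.
Qed.

Lemma supersolution_hopf x0 nu i0 : (i0 < m)%nat ->
  ((x0 = a i0 /\ nu = -1) \/ (x0 = b i0 /\ nu = 1)) ->
  (forall x, in_Omega m a b x -> u x0 < u x) -> u x0 < 0 ->
  exists l, has_normal_deriv u x0 nu l /\ l < 0.
Proof.
  intros Hi0 Hx0 Hmin Hneg.
  destruct (Hu i0 Hi0) as [v [Hv Huv]].
  set (p := a i0) in *. set (q := b i0) in *. assert (Hpq : p < q) by apply Hab, Hi0.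
  assert (Hin : forall x, p < x < q -> in_Omega m a b x) by (intros x Hx; exists i0; auto).
  set (C := CK * int_Omega m a b (fun _ => 1) + M).
  assert (HC : 0 <= C).
  { assert (Hmid := Hin ((p + q) / 2) ltac:(lra)).
    pose proof (Hc0 _ Hmid). pose proof (HcM _ Hmid). pose proof (HKpos 0). pose proof (HKCK 0).
    pose proof (int_Omega_one_nonneg m a b ltac:(intros k Hk; pose proof (Hab k Hk); lra)).
    unfold C. nra. }
  assert (Habove : forall x, p < x < q -> u x0 < v x).
  { intros x Hx. rewrite <- Huv by lra. apply Hmin, Hin, Hx. }
  assert (Hsecond : forall x, p < x < q -> Derive_n v 2 x <= C * (v x - u x0)).
  { intros x Hx. rewrite <- (Derive_n_eq_on_interval u v p q) by assumption.
    rewrite <- Huv by lra. apply supersolution_Derive2_le; [apply Hin, Hx| |lra].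
    intros y Hy. now apply Rlt_le, Hmin. }
  assert (Hdv : forall y, derivable_pt_lim v y (Derive v y)).
  { intros y. apply is_derive_Reals, Derive_correct, (Hv 1%nat). }
  destruct Hx0 as [[-> ->]|[-> ->]].
  - exists (-1 * Derive v p). split.
    + apply (has_normal_deriv_of_derivable u v _ _ _ (q - p)); try lra; auto.
      * apply Huv. lra.
      * intros h Hh. apply Huv. lra.
    + pose proof (hopf_left v p q (u p) C Hv Hpq HC ltac:(symmetry; apply Huv; lra)
        Habove Hsecond).
      lra.
  - exists (1 * Derive v q). split.
    + apply (has_normal_deriv_of_derivable u v _ _ _ (q - p)); try lra; auto.
      * apply Huv. lra.
      * intros h Hh. apply Huv. lra.
    + pose proof (hopf_right v p q (u q) C Hv Hpq HC ltac:(symmetry; apply Huv; lra)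
        Habove Hsecond).
      lra.
Qed.

End Supersolution.

End Omega.

Theorem lemma4 (m : nat) (a b : nat -> R) (K c u : R -> R) (cK CK : R)
  (x0 nu : R) (i0 : nat) :
  (1 <= m)%nat ->
  ordered_intervals m a b ->
  (* K is C^1, even, with c_K < K < C_K, |K'| < C_K, 0 < c_K *)
  0 < cK ->
  (forall z, ex_derive K z /\ continuous (Derive K) z) ->
  (forall z, K (- z) = K z) ->
  (forall z, 0 < K z) ->
  (forall z, cK < K z < CK) ->
  (forall z, Rabs (Derive K z) < CK) ->
  (* c non-negative, bounded, smooth in Omega *)
  (forall x, in_Omega m a b x -> forall n, ex_derive_n c n x) ->
  (forall x, in_Omega m a b x -> 0 <= c x) ->
  (exists M, forall x, in_Omega m a b x -> Rabs (c x) <= M) ->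
  (* u smooth on the closure of Omega, supersolution in Omega *)
  smooth_on_cl_Omega m a b u ->
  (forall x, in_Omega m a b x ->
     - Derive_n u 2 x + Lop m a b K u x + c x * u x >= 0) ->
  (* x0 in the boundary of Omega, nu the exterior normal there *)
  (i0 < m)%nat ->
  ((x0 = a i0 /\ nu = -1) \/ (x0 = b i0 /\ nu = 1)) ->
  (* min over Omega of u is u(x0) < 0 *)
  (forall x, in_Omega m a b x -> u x0 <= u x) ->
  u x0 < 0 ->
  (forall x, in_cl_Omega m a b x -> u x = u x0) \/
  (exists l, has_normal_deriv u x0 nu l /\ l < 0).
Proof.
  intros _ [Hab _] _ HKdiff _ HKpos HKbound _ _ Hc0 [M HM] Hu Hsup Hi0 Hx0 Hmin Hneg.
  assert (HK : forall z, continuous K z).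
  { intros z. apply (@ex_derive_continuous R_AbsRing R_NormedModule), HKdiff. }
  assert (HKCK : forall z, K z <= CK) by (intros z; pose proof (HKbound z); lra).
  assert (HcM : forall x, in_Omega m a b x -> c x <= M).
  { intros x Hx. pose proof (HM x Hx). pose proof (Rle_abs (c x)). lra. }
  destruct (classic (exists x1, in_Omega m a b x1 /\ u x1 = u x0)) as [[x1 [Hx1 Hux1]]|Hnone].
  - left. rewrite <- Hux1.
    apply (supersolution_const_of_interior_min m a b K u Hab HK HKpos Hu c Hc0 Hsup x1 Hx1);
      rewrite Hux1; [exact Hmin|lra].
  - right. apply (supersolution_hopf m a b K u Hab HK HKpos Hu c CK M HKCK Hc0 HcM Hsup x0 nu i0);
      auto.
    intros x Hx. destruct (Rle_lt_or_eq_dec _ _ (Hmin x Hx)) as [|Heq]; [assumption|].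
    exfalso. apply Hnone. exists x. auto.
Qed.
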